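(* Let $m$ be an odd positive integer, $k\ge0$ an integer and $N=k+\frac{m-1}{2}$. Then for real $x_0$ and $r>0$ the following identities hold: \[\text{(i)}\quad \sum_{n=0}^{N}\binom{N}{n}(-2)^{-n}D_r(n)[\cos(2x_0r)]=\exp\left(-x_0^2\right)\sum_{n=0}^\infty\frac{2^{2n}n!\,x_0^{2n}}{(2n)!}L_n^{\left(k+\frac m2-1\right)}\left(r^2\right),\] \[\text{(ii)}\quad \sum_{n=0}^{N}\binom{N}{n}(-2)^{-n}D^r(n)[\sin(2x_0r)]=\exp\left(-x_0^2\right)\sum_{n=0}^\infty\frac{2^{2n+1}n!\,x_0^{2n+1}}{(2n+1)!}\,r\,L_n^{\left(k+\frac m2\right)}\left(r^2\right),\] where $L_n^{(a)}$ denote the generalized Laguerre polynomials.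
   Context: The operators act in the variable $r>0$ (with $x_0$ a parameter): $D_r(n)[f]=(r^{-1}\partial_r)^nf$ and $D^r(n)[f]=(\partial_r\circ r^{-1})^nf$ (i.e. $n$-fold application of $f\mapsto\partial_r(f/r)$), with $D_r(0)=D^r(0)=\mathrm{id}$. *)

From Stdlib Require Import Reals Arith Factorial Binomial.
From Coquelicot Require Import Coquelicot.
Open Scope R_scope.

Fixpoint D_r (n : nat) (f : R -> R) : R -> R :=
  match n with
  | O => f
  | S n' => fun r => / r * Derive (D_r n' f) r
  end.

Fixpoint D_up_r (n : nat) (f : R -> R) : R -> R :=
  match n with
  | O => f
  | S n' => fun r => Derive (fun s => D_up_r n' f s / s) r
  end.

Fixpoint binomR (s : R) (k : nat) : R :=
  match k with
  | O => 1
  | S k' => binomR s k' * (s - INR k') / INR (S k')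
  end.

Definition laguerre (n : nat) (a x : R) : R :=
  sum_f_R0 (fun j => (-1) ^ j * binomR (INR n + a) (n - j) * x ^ j / INR (fact j)) n.

(* Put y = x0^2 and u = s^2. Then cos (2 x0 s) = F (u) and sin (2 x0 s) = 2 x0 s F (u),
   where F (u) = 0F1(; b; - y u) with b = 1/2, resp. b = 3/2.  On functions of s^2
   (times s for D^r) both operators r^-1 d/dr and d/dr o r^-1 act as 2 d/du, so the
   left-hand sides are sum_n C(N,n) (-1)^n F^(n)(u).  Multiplying by e^y and expanding as a
   Cauchy product in y, the coefficient of y^p is a double sum that collapses, by the
   Chu-Vandermonde identity, to L_p^(N-1+b)(u) / (b)_p.  Finally
   (2p)! = 4^p p! (1/2)_p and (2p+1)! = 4^p p! (3/2)_p turn this into the stated series. *)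

From Stdlib Require Import Reals Lia Lra Factorial Binomial.
From Coquelicot Require Import Coquelicot.
Open Scope R_scope.

(** * Pochhammer symbols *)

Fixpoint pochhammer (c : R) (n : nat) : R :=
  match n with
  | O => 1
  | S n' => pochhammer c n' * (c + INR n')
  end.

Lemma pochhammer_gt0 c n : 0 < c -> 0 < pochhammer c n.
Proof.
  intros Hc; induction n as [|n IH]; simpl; [lra|].
  apply Rmult_lt_0_compat; [exact IH|]. pose proof (pos_INR n); lra.
Qed.

Lemma pochhammer_ge_pow c n : 0 < c -> c ^ n <= pochhammer c n.
Proof.
  intros Hc; induction n as [|n IH]; simpl; [lra|].
  rewrite Rmult_comm. pose proof (pos_INR n).
  apply Rmult_le_compat; try lra. now apply pow_le; lra.
Qed.

Lemma pochhammer_add c m n :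
  pochhammer c (m + n) = pochhammer c m * pochhammer (c + INR m) n.
Proof.
  induction n as [|n IH]; simpl; [now rewrite Nat.add_0_r, Rmult_1_r|].
  rewrite Nat.add_succ_r; simpl. rewrite IH, plus_INR. ring.
Qed.

Lemma fact_double n :
  INR (fact (2 * n)) = 4 ^ n * INR (fact n) * pochhammer (1/2) n.
Proof.
  induction n as [|n IH]; [simpl; ring|].
  replace (2 * S n)%nat with (S (S (2 * n))) by lia.
  rewrite !fact_simpl, !mult_INR, IH. simpl pochhammer. simpl pow.
  rewrite !S_INR, mult_INR. simpl INR. field.
Qed.

Lemma fact_double_S n :
  INR (fact (2 * n + 1)) = 4 ^ n * INR (fact n) * pochhammer (3/2) n.
Proof.
  induction n as [|n IH]; [simpl; ring|].
  replace (2 * S n + 1)%nat with (S (S (2 * n + 1))) by lia.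
  rewrite !fact_simpl, !mult_INR, IH. simpl pochhammer. simpl pow.
  rewrite !S_INR, plus_INR, mult_INR. simpl INR. field.
Qed.

Lemma sum_f_R0_zero_tail (f : nat -> R) a b : (a <= b)%nat ->
  (forall n, (a < n <= b)%nat -> f n = 0) -> sum_f_R0 f b = sum_f_R0 f a.
Proof.
  intros Hab Hf. replace b with (a + (b - a))%nat by lia.
  assert (Hf' : forall n, (a < n <= a + (b - a))%nat -> f n = 0)
    by (intros n Hn; apply Hf; lia).
  clear Hf Hab. induction (b - a)%nat as [|d IH].
  - now rewrite Nat.add_0_r.
  - rewrite Nat.add_succ_r; simpl.
    rewrite IH by (intros n Hn; apply Hf'; lia). rewrite Hf' by lia. ring.
Qed.

Lemma sum_f_R0_comm (f : nat -> nat -> R) M N :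
  sum_f_R0 (fun i => sum_f_R0 (fun j => f i j) M) N =
  sum_f_R0 (fun j => sum_f_R0 (fun i => f i j) N) M.
Proof.
  induction N as [|N IH]; [reflexivity|].
  simpl. rewrite IH, <- sum_plus. reflexivity.
Qed.

Lemma sum_triangle_indicator (f : nat -> nat -> R) p :
  sum_f_R0 (fun n => sum_f_R0 (fun j => f n j) (p - n)) p =
  sum_f_R0 (fun n => sum_f_R0 (fun j => if (n + j <=? p)%nat then f n j else 0) p) p.
Proof.
  apply sum_eq; intros n Hn.
  rewrite (sum_f_R0_zero_tail _ (p - n) p).
  - apply sum_eq; intros j Hj. now replace (n + j <=? p)%nat with true
      by (symmetry; apply Nat.leb_le; lia).
  - lia.
  - intros j Hj. now replace (n + j <=? p)%nat with false
      by (symmetry; apply Nat.leb_gt; lia).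
Qed.

Lemma sum_triangle_swap (f : nat -> nat -> R) p :
  sum_f_R0 (fun n => sum_f_R0 (fun j => f n j) (p - n)) p =
  sum_f_R0 (fun j => sum_f_R0 (fun n => f n j) (p - j)) p.
Proof.
  rewrite sum_triangle_indicator, (sum_triangle_indicator (fun j n => f n j)).
  rewrite sum_f_R0_comm. apply sum_eq; intros j _; apply sum_eq; intros n _.
  now rewrite Nat.add_comm.
Qed.

(** * Generalized binomial coefficients and the Chu-Vandermonde identity *)

Lemma binomR_succ s t : binomR s (S t) = binomR s t * (s - INR t) / INR (S t).
Proof. reflexivity. Qed.

Lemma binomR_pascal s t : binomR (s + 1) (S t) = binomR s (S t) + binomR s t.
Proof.
  induction t as [|t IH]; [simpl; field|].
  rewrite (binomR_succ (s + 1)), IH, !(binomR_succ s (S t)), (binomR_succ s t).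
  rewrite !S_INR. pose proof (pos_INR t). field. lra.
Qed.

Lemma binomR_absorb s t : binomR (s + 1) (S t) = (s + 1) / INR (S t) * binomR s t.
Proof.
  induction t as [|t IH]; [simpl; field|].
  rewrite (binomR_succ (s + 1)), IH, (binomR_succ s t).
  rewrite !S_INR. pose proof (pos_INR t). field. lra.
Qed.

Lemma binomR_pochhammer c t :
  binomR (c + INR t - 1) t = pochhammer c t / INR (fact t).
Proof.
  induction t as [|t IH]; [simpl; field|].
  replace (c + INR (S t) - 1) with (c + INR t - 1 + 1) by (rewrite S_INR; ring).
  rewrite binomR_absorb, IH, fact_simpl, mult_INR. simpl pochhammer.
  pose proof (INR_fact_neq_0 t). rewrite S_INR. pose proof (pos_INR t).
  field. lra.
Qed.

Lemma binomR_nat_gt N n : (N < n)%nat -> binomR (INR N) n = 0.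
Proof.
  induction n as [|n IH]; intros HNn; [lia|].
  rewrite binomR_succ. destruct (Nat.eq_dec N n) as [->|].
  - unfold Rdiv. ring.
  - rewrite IH by lia. unfold Rdiv. ring.
Qed.

Lemma binomR_nat N n : (n <= N)%nat -> binomR (INR N) n = Binomial.C N n.
Proof.
  induction n as [|n IH]; intros HnN.
  - unfold Binomial.C. rewrite Nat.sub_0_r. simpl. field. apply INR_fact_neq_0.
  - rewrite binomR_succ, IH, pascal_step3, minus_INR by lia. field.
    rewrite S_INR. pose proof (pos_INR n). lra.
Qed.

Lemma chu_vandermonde x N t :
  binomR (x + INR N) t =
  sum_f_R0 (fun n => binomR (INR N) n * binomR x (t - n)) t.
Proof.
  revert t; induction N as [|N IH]; intros t.
  - rewrite (sum_f_R0_zero_tail _ 0 t) by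
      (lia || (intros n Hn; rewrite binomR_nat_gt by lia; ring)).
    simpl. rewrite Nat.sub_0_r, Rplus_0_r. ring.
  - destruct t as [|t]; [simpl; ring|].
    rewrite S_INR, <- Rplus_assoc, binomR_pascal, !IH.
    rewrite !(decomp_sum _ (S t)) by lia. simpl pred.
    rewrite Rplus_assoc, <- sum_plus. f_equal.
    apply sum_eq; intros n _. rewrite binomR_pascal. simpl (S t - S n)%nat. ring.
Qed.

Lemma binomR_pochhammer_ratio c n t : 0 < c -> (n <= t)%nat ->
  binomR (c + INR t - 1) (t - n) =
  pochhammer c t / (pochhammer c n * INR (fact (t - n))).
Proof.
  intros Hc Hnt.
  replace (c + INR t - 1) with (c + INR n + INR (t - n) - 1)
    by (rewrite minus_INR by lia; ring).
  replace (pochhammer c t) with (pochhammer c (n + (t - n))) by (f_equal; lia).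
  rewrite binomR_pochhammer, pochhammer_add.
  pose proof (pochhammer_gt0 c n Hc). pose proof (INR_fact_neq_0 (t - n)).
  field. split; lra.
Qed.

Lemma sum_binomR_pochhammer c N t : 0 < c ->
  sum_f_R0 (fun n => binomR (INR N) n / (pochhammer c n * INR (fact (t - n)))) t =
  binomR (c + INR t - 1 + INR N) t / pochhammer c t.
Proof.
  intros Hc. rewrite chu_vandermonde. unfold Rdiv at 2. rewrite Rmult_comm, scal_sum.
  apply sum_eq; intros n Hn. rewrite binomR_pochhammer_ratio by (exact Hc || exact Hn).
  pose proof (pochhammer_gt0 c n Hc). pose proof (pochhammer_gt0 c t Hc).
  pose proof (INR_fact_neq_0 (t - n)). field. repeat split; lra.
Qed.

(* [binomR (INR N)] vanishes beyond [N], unlike [Binomial.C N], so both sides equal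
   the same sum up to [N + p]. *)
Lemma sum_C_truncated N p (F : nat -> R) :
  sum_f_R0 (fun n => Binomial.C N n * (if (n <=? p)%nat then F n else 0)) N =
  sum_f_R0 (fun n => binomR (INR N) n * F n) p.
Proof.
  set (H n := binomR (INR N) n * (if (n <=? p)%nat then F n else 0)).
  transitivity (sum_f_R0 H (N + p)).
  - rewrite (sum_f_R0_zero_tail H N (N + p)); [| lia |].
    + apply sum_eq; intros n Hn. unfold H. now rewrite binomR_nat.
    + intros n Hn. unfold H. rewrite binomR_nat_gt by lia. ring.
  - rewrite (sum_f_R0_zero_tail H p (N + p)); [| lia |].
    + apply sum_eq; intros n Hn. unfold H.
      now replace (n <=? p)%nat with true by (symmetry; apply Nat.leb_le; lia).
    + intros n Hn. unfold H.
      replace (n <=? p)%nat with false by (symmetry; apply Nat.leb_gt; lia). ring.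
Qed.

(* [(-1) ^ n * y ^ (n + t) * cauchy_coef b u n t] is the [t]-th term of the Cauchy product
   of the [n]-th derivative of [u |-> 0F1(; b; - y u)] with the exponential series of [y]. *)
Definition cauchy_coef (b u : R) (n t : nat) : R :=
  sum_f_R0 (fun j => (- u) ^ j /
    (INR (fact j) * pochhammer b (j + n) * INR (fact (t - j)))) t.

Lemma sum_binomR_cauchy_coef b N p u : 0 < b ->
  sum_f_R0 (fun n => binomR (INR N) n * cauchy_coef b u n (p - n)) p =
  laguerre p (INR N - 1 + b) u / pochhammer b p.
Proof.
  intros Hb. unfold cauchy_coef.
  transitivity (sum_f_R0 (fun n => sum_f_R0 (fun j => binomR (INR N) n *
    ((- u) ^ j / (INR (fact j) * pochhammer b (j + n) * INR (fact (p - n - j)))))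
    (p - n)) p).
  { apply sum_eq; intros n _. rewrite scal_sum. apply sum_eq; intros j _. ring. }
  rewrite sum_triangle_swap. unfold laguerre, Rdiv at 2.
  rewrite Rmult_comm, scal_sum. apply sum_eq; intros j Hj.
  pose proof (pochhammer_gt0 b j Hb) as Hbj.
  assert (Hc : 0 < b + INR j) by (pose proof (pos_INR j); lra).
  transitivity ((- u) ^ j / (INR (fact j) * pochhammer b j) *
    sum_f_R0 (fun n => binomR (INR N) n /
      (pochhammer (b + INR j) n * INR (fact (p - j - n)))) (p - j)).
  { rewrite scal_sum. apply sum_eq; intros n _.
    rewrite pochhammer_add.
    replace (p - n - j)%nat with (p - j - n)%nat by lia.
    pose proof (pochhammer_gt0 _ n Hc). pose proof (INR_fact_neq_0 j).
    pose proof (INR_fact_neq_0 (p - j - n)). field. repeat split; lra. }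
  rewrite sum_binomR_pochhammer by exact Hc.
  replace (b + INR j + INR (p - j) - 1 + INR N) with (INR p + (INR N - 1 + b))
    by (rewrite minus_INR by lia; ring).
  replace (pochhammer b p) with (pochhammer b j * pochhammer (b + INR j) (p - j))
    by (rewrite <- pochhammer_add; f_equal; lia).
  replace (- u) with (-1 * u) by ring. rewrite Rpow_mult_distr.
  pose proof (pochhammer_gt0 _ (p - j) Hc). pose proof (INR_fact_neq_0 j).
  field. repeat split; lra.
Qed.

(** * The hypergeometric series 0F1 *)

Definition hyp0F1_coef (b z : R) (j : nat) : R :=
  z ^ j / (INR (fact j) * pochhammer b j).

Lemma ex_series_exp w : ex_series (fun n => w ^ n / INR (fact n)).
Proof.
  exists (exp w). pose proof (proj1 (is_pseries_R _ _ _) (is_exp_Reals w)) as H.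
  eapply is_series_ext; [|exact H]. intros n; simpl. unfold Rdiv; ring.
Qed.

Lemma CV_radius_infinite (a : nat -> R) :
  (forall x, CV_disk a x) -> CV_radius a = p_infty.
Proof.
  intros Ha. unfold CV_radius.
  destruct (Lub_Rbar_correct (CV_disk a)) as [Hub _].
  destruct (Lub_Rbar (CV_disk a)) as [l| |]; [| reflexivity |].
  - specialize (Hub (l + 1) (Ha _)). simpl in Hub. lra.
  - destruct (Hub 0 (Ha 0)).
Qed.

Lemma CV_radius_exp : CV_radius (fun n => / INR (fact n)) = p_infty.
Proof.
  apply CV_radius_infinite; intros x. unfold CV_disk.
  eapply ex_series_ext; [|apply (ex_series_exp (Rabs x))]. intros n.
  rewrite Rabs_mult, Rabs_inv, RPow_abs, (Rabs_pos_eq (INR _)) by apply pos_INR.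
  apply Rmult_comm.
Qed.

Lemma CV_radius_hyp0F1 b z : 0 < b -> CV_radius (hyp0F1_coef b z) = p_infty.
Proof.
  intros Hb. apply CV_radius_infinite; intros x. unfold CV_disk.
  apply (@ex_series_le R_AbsRing R_CompleteNormedModule _
    (fun n => (Rabs z * Rabs x / b) ^ n / INR (fact n))); [|apply ex_series_exp].
  intros n. change (norm ?v) with (Rabs v). rewrite Rabs_Rabsolu.
  unfold hyp0F1_coef.
  pose proof (pochhammer_ge_pow b n Hb) as Hpow.
  pose proof (pow_lt b n Hb). pose proof (INR_fact_lt_0 n).
  rewrite Rabs_mult, Rabs_div, Rabs_mult, <- !RPow_abs,
    (Rabs_pos_eq (INR _)), (Rabs_pos_eq (pochhammer _ _)) by lra || nra.
  set (A := Rabs z ^ n * Rabs x ^ n).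
  assert (0 <= A) by (apply Rmult_le_pos; apply pow_le, Rabs_pos).
  assert (0 <= / INR (fact n)) by (left; apply Rinv_0_lt_compat; lra).
  replace (Rabs z ^ n / (INR (fact n) * pochhammer b n) * Rabs x ^ n)
    with (A * / INR (fact n) * / pochhammer b n)
    by (unfold A; field; split; lra).
  replace ((Rabs z * Rabs x / b) ^ n / INR (fact n))
    with (A * / INR (fact n) * / b ^ n)
    by (unfold A, Rdiv; rewrite !Rpow_mult_distr, pow_inv; ring).
  apply Rmult_le_compat_l; [nra|].
  apply Rinv_le_contravar; assumption.
Qed.

Lemma PSeries_abs_convergent (a : nat -> R) u : CV_radius a = p_infty ->
  is_series (fun j => a j * u ^ j) (PSeries a u) /\
  ex_series (fun j => Rabs (a j * u ^ j)).
Proof.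
  intros Ha. assert (Hu : Rbar_lt (Rabs u) (CV_radius a)) by (rewrite Ha; exact I).
  split.
  - apply is_pseries_R, PSeries_correct, CV_radius_inside, Hu.
  - exact (CV_disk_inside _ _ Hu).
Qed.

Lemma PSeries_exp y : PSeries (fun n => / INR (fact n)) y = exp y.
Proof. apply is_pseries_unique, is_exp_Reals. Qed.

Lemma PS_derive_n_O (a : nat -> R) k : PS_derive_n 0 a k = a k.
Proof.
  unfold PS_derive_n. rewrite Nat.add_0_r. field. apply INR_fact_neq_0.
Qed.

Lemma PS_derive_n_hyp0F1 b z n j : 0 < b ->
  PS_derive_n n (hyp0F1_coef b z) j =
  z ^ (j + n) / (INR (fact j) * pochhammer b (j + n)).
Proof.
  intros Hb. unfold PS_derive_n, hyp0F1_coef.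
  pose proof (INR_fact_neq_0 j). pose proof (INR_fact_neq_0 (j + n)).
  pose proof (pochhammer_gt0 b (j + n) Hb). field. repeat split; lra.
Qed.

Lemma PS_derive_PS_derive_n a n k :
  PS_derive (PS_derive_n n a) k = PS_derive_n (S n) a k.
Proof.
  unfold PS_derive, PS_derive_n. replace (S k + n)%nat with (k + S n)%nat by lia.
  rewrite fact_simpl, mult_INR. pose proof (INR_fact_neq_0 k).
  pose proof (pos_INR k). rewrite S_INR. field. lra.
Qed.

Lemma is_derive_PSeries_derive_n a n u : CV_radius a = p_infty ->
  is_derive (PSeries (PS_derive_n n a)) u (PSeries (PS_derive_n (S n) a) u).
Proof.
  intros Ha. rewrite <- (PSeries_ext _ _ _ (PS_derive_PS_derive_n a n)).
  apply is_derive_PSeries. rewrite CV_radius_derive_n, Ha. exact I.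
Qed.

(* Stdlib defines [cos x] as the sum of [cos_n i * (x ^ 2) ^ i], and [sin x] as [x] times
   the sum of [sin_n i * (x ^ 2) ^ i]. *)
Lemma cos_hyp0F1 x s : cos (2 * x * s) = PSeries (hyp0F1_coef (1/2) (- x ^ 2)) (s ^ 2).
Proof.
  assert (Hterm : forall i, cos_n i * (Rsqr (2 * x * s)) ^ i =
                            hyp0F1_coef (1/2) (- x ^ 2) i * (s ^ 2) ^ i).
  { intros i. unfold cos_n, hyp0F1_coef, Rsqr. rewrite fact_double.
    replace (- x ^ 2) with (-1 * x ^ 2) by ring.
    replace (2 * x * s * (2 * x * s)) with (4 * x ^ 2 * s ^ 2) by ring.
    rewrite !Rpow_mult_distr.
    pose proof (INR_fact_neq_0 i). pose proof (pochhammer_gt0 (1/2) i ltac:(lra)).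
    pose proof (pow_lt 4 i ltac:(lra)). field. repeat split; lra. }
  unfold cos. destruct (exist_cos (Rsqr (2 * x * s))) as [l Hl].
  symmetry. apply is_series_unique, (is_series_ext _ _ _ Hterm), is_series_Reals, Hl.
Qed.

Lemma sin_hyp0F1 x s :
  sin (2 * x * s) = 2 * x * s * PSeries (hyp0F1_coef (3/2) (- x ^ 2)) (s ^ 2).
Proof.
  assert (Hterm : forall i, sin_n i * (Rsqr (2 * x * s)) ^ i =
                            hyp0F1_coef (3/2) (- x ^ 2) i * (s ^ 2) ^ i).
  { intros i. unfold sin_n, hyp0F1_coef, Rsqr. rewrite fact_double_S.
    replace (- x ^ 2) with (-1 * x ^ 2) by ring.
    replace (2 * x * s * (2 * x * s)) with (4 * x ^ 2 * s ^ 2) by ring.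
    rewrite !Rpow_mult_distr.
    pose proof (INR_fact_neq_0 i). pose proof (pochhammer_gt0 (3/2) i ltac:(lra)).
    pose proof (pow_lt 4 i ltac:(lra)). field. repeat split; lra. }
  unfold sin. destruct (exist_sin (Rsqr (2 * x * s))) as [l Hl].
  f_equal. symmetry.
  apply is_series_unique, (is_series_ext _ _ _ Hterm), is_series_Reals, Hl.
Qed.

Lemma is_series_delay (a : nat -> R) n l : is_series a l ->
  is_series (fun p => if (n <=? p)%nat then a (p - n)%nat else 0) l.
Proof.
  intros Ha. destruct n as [|n].
  - refine (is_series_ext _ _ _ _ Ha). intros p. now rewrite Nat.sub_0_r.
  - apply (is_series_decr_n _ (S n)); [lia|].
    replace (plus l (opp (sum_n _ (pred (S n))))) with l.
    + refine (is_series_ext _ _ _ _ Ha). intros k.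
      replace (S n <=? S n + k)%nat with true by (symmetry; apply Nat.leb_le; lia).
      f_equal; lia.
    + rewrite sum_n_Reals. simpl pred.
      rewrite (sum_eq _ (fun _ => 0)), sum_cte.
      * rewrite Rmult_0_l. unfold plus, opp; simpl. now rewrite Ropp_0, Rplus_0_r.
      * intros i Hi. now replace (S n <=? i)%nat with false
          by (symmetry; apply Nat.leb_gt; lia).
Qed.

Lemma is_series_sum_f_R0 (F : nat -> nat -> R) (L : nat -> R) M :
  (forall n, is_series (F n) (L n)) ->
  is_series (fun p => sum_f_R0 (fun n => F n p) M) (sum_f_R0 L M).
Proof.
  intros HF. induction M as [|M IH]; [apply HF|].
  exact (is_series_plus _ _ _ _ IH (HF (S M))).
Qed.

Lemma is_series_hyp0F1_derive_mult_exp b y u n : 0 < b ->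
  is_series (fun t => (-1) ^ n * y ^ (n + t) * cauchy_coef b u n t)
    (PSeries (PS_derive_n n (hyp0F1_coef b (- y))) u * exp y).
Proof.
  intros Hb.
  assert (Hterm : forall t,
    sum_f_R0 (fun k => PS_derive_n n (hyp0F1_coef b (- y)) k * u ^ k *
                       (/ INR (fact (t - k)) * y ^ (t - k))) t =
    (-1) ^ n * y ^ (n + t) * cauchy_coef b u n t).
  { intros t. unfold cauchy_coef. rewrite scal_sum. apply sum_eq; intros k Hk.
    rewrite PS_derive_n_hyp0F1 by exact Hb.
    replace (- y) with (-1 * y) by ring. replace (- u) with (-1 * u) by ring.
    replace (n + t)%nat with (k + n + (t - k))%nat by lia.
    rewrite !Rpow_mult_distr, !pow_add.
    pose proof (INR_fact_neq_0 k). pose proof (INR_fact_neq_0 (t - k)).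
    pose proof (pochhammer_gt0 b (k + n) Hb). field. repeat split; lra. }
  destruct (PSeries_abs_convergent (PS_derive_n n (hyp0F1_coef b (- y))) u)
    as [Ha Ha_abs].
  { rewrite CV_radius_derive_n. apply CV_radius_hyp0F1, Hb. }
  destruct (PSeries_abs_convergent _ y CV_radius_exp) as [He He_abs].
  rewrite <- PSeries_exp.
  exact (is_series_ext _ _ _ Hterm (is_series_mult _ _ _ _ Ha He Ha_abs He_abs)).
Qed.

Lemma is_series_laguerre b N y u : 0 < b ->
  is_series (fun p => y ^ p / pochhammer b p * laguerre p (INR N - 1 + b) u)
    (exp y * sum_f_R0 (fun n => Binomial.C N n * (-1) ^ n *
       PSeries (PS_derive_n n (hyp0F1_coef b (- y))) u) N).
Proof.
  intros Hb.
  set (H n := PSeries (PS_derive_n n (hyp0F1_coef b (- y))) u).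
  set (T n p := Binomial.C N n *
                (if (n <=? p)%nat then cauchy_coef b u n (p - n) else 0)).
  assert (Hn : forall n, is_series (fun p => T n p * y ^ p)
                                   (H n * exp y * (Binomial.C N n * (-1) ^ n))).
  { intros n.
    assert (Hsign : forall p,
      (if (n <=? p)%nat then (-1) ^ n * y ^ (n + (p - n)) * cauchy_coef b u n (p - n)
       else 0) * (Binomial.C N n * (-1) ^ n) = T n p * y ^ p).
    { intros p. unfold T. destruct (Nat.leb_spec n p); [|ring].
      replace (n + (p - n))%nat with p by lia.
      assert (Hsq : (-1) ^ n * (-1) ^ n = 1).
      { rewrite <- Rpow_mult_distr. replace (-1 * -1) with 1 by ring. apply pow1. }
      transitivity ((-1) ^ n * (-1) ^ n * (Binomial.C N n * cauchy_coef b u n (p - n) * y ^ p));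
        [ring | rewrite Hsq; ring]. }
    exact (is_series_ext _ _ _ Hsign (is_series_scal_r _ _ _
      (is_series_delay _ n _ (is_series_hyp0F1_derive_mult_exp b y u n Hb)))). }
  assert (Hterm : forall p, sum_f_R0 (fun n => T n p * y ^ p) N =
                            y ^ p / pochhammer b p * laguerre p (INR N - 1 + b) u).
  { intros p. rewrite <- scal_sum. unfold T.
    rewrite sum_C_truncated, sum_binomR_cauchy_coef by exact Hb.
    unfold Rdiv. ring. }
  replace (exp y * _) with (sum_f_R0 (fun n => H n * exp y * (Binomial.C N n * (-1) ^ n)) N).
  - exact (is_series_ext _ _ _ Hterm (is_series_sum_f_R0 _ _ N Hn)).
  - rewrite scal_sum. apply sum_eq; intros n _. unfold H. ring.
Qed.

(** * The operators D_r and D^r on functions of r^2 *)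

Section RadialOperators.

Variable G : nat -> R -> R.
Hypothesis G_derive : forall n u, is_derive (G n) u (G (S n) u).

Lemma is_derive_comp_sq n s :
  is_derive (fun t => G n (t ^ 2)) s (2 * s * G (S n) (s ^ 2)).
Proof.
  apply (is_derive_comp (G n) (fun t => t ^ 2)).
  - apply G_derive.
  - auto_derive; [exact I | ring].
Qed.

Lemma D_r_comp_sq f : (forall s, 0 < s -> f s = G O (s ^ 2)) ->
  forall n s, 0 < s -> D_r n f s = 2 ^ n * G n (s ^ 2).
Proof.
  intros Hf n; induction n as [|n IH]; intros s Hs; simpl D_r.
  - rewrite Hf by exact Hs. ring.
  - rewrite (Derive_ext_loc _ (fun t => 2 ^ n * G n (t ^ 2))).
    + rewrite (is_derive_unique _ s (2 ^ n * (2 * s * G (S n) (s ^ 2))))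
        by apply is_derive_scal, is_derive_comp_sq.
      simpl. field. lra.
    + generalize (open_gt 0 s Hs). apply filter_imp. exact IH.
Qed.

Lemma D_up_r_comp_sq f : (forall s, 0 < s -> f s = s * G O (s ^ 2)) ->
  forall n s, 0 < s -> D_up_r n f s = s * (2 ^ n * G n (s ^ 2)).
Proof.
  intros Hf n; induction n as [|n IH]; intros s Hs; simpl D_up_r.
  - rewrite Hf by exact Hs. ring.
  - rewrite (Derive_ext_loc _ (fun t => 2 ^ n * G n (t ^ 2))).
    + rewrite (is_derive_unique _ s (2 ^ n * (2 * s * G (S n) (s ^ 2))))
        by apply is_derive_scal, is_derive_comp_sq.
      simpl. ring.
    + generalize (open_gt 0 s Hs). apply filter_imp. intros t Ht.
      rewrite IH by exact Ht. field. lra.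
Qed.

End RadialOperators.

Lemma Rinv_pow_opp2 n : / (-2) ^ n * 2 ^ n = (-1) ^ n.
Proof.
  rewrite <- pow_inv, <- Rpow_mult_distr. f_equal. field.
Qed.

Lemma exp_opp_mult_exp y z : exp (- y) * (exp y * z) = z.
Proof.
  rewrite <- Rmult_assoc, <- exp_plus, Rplus_opp_l, exp_0. ring.
Qed.

Lemma D_r_cos_laguerre N x0 r : 0 < r ->
  exists S : R,
    is_series (fun n => 2 ^ (2 * n) * INR (fact n) * x0 ^ (2 * n) / INR (fact (2 * n))
                        * laguerre n (INR N - 1/2) (r ^ 2)) S /\
    sum_f_R0 (fun n => Binomial.C N n * / (-2) ^ n
                       * D_r n (fun s => cos (2 * x0 * s)) r) N
    = exp (- x0 ^ 2) * S.
Proof.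
  intros Hr.
  set (G n v := PSeries (PS_derive_n n (hyp0F1_coef (1/2) (- x0 ^ 2))) v).
  assert (HG : forall n v, is_derive (G n) v (G (S n) v))
    by (intros; apply is_derive_PSeries_derive_n, CV_radius_hyp0F1; lra).
  assert (Hcos : forall s, 0 < s -> cos (2 * x0 * s) = G O (s ^ 2)).
  { intros s _. unfold G. rewrite cos_hyp0F1. apply PSeries_ext. intros k.
    now rewrite PS_derive_n_O. }
  exists (exp (x0 ^ 2) * sum_f_R0 (fun n => Binomial.C N n * (-1) ^ n * G n (r ^ 2)) N).
  split.
  - assert (Hterm : forall n, (x0 ^ 2) ^ n / pochhammer (1/2) n
        * laguerre n (INR N - 1 + 1/2) (r ^ 2) =
      2 ^ (2 * n) * INR (fact n) * x0 ^ (2 * n) / INR (fact (2 * n))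
        * laguerre n (INR N - 1/2) (r ^ 2)).
    { intros n. replace (INR N - 1 + 1/2) with (INR N - 1/2) by lra.
      rewrite fact_double, !pow_mult. replace (2 ^ 2) with 4 by ring.
      pose proof (INR_fact_neq_0 n). pose proof (pochhammer_gt0 (1/2) n ltac:(lra)).
      pose proof (pow_lt 4 n ltac:(lra)). field. repeat split; lra. }
    exact (is_series_ext _ _ _ Hterm (is_series_laguerre (1/2) N (x0 ^ 2) (r ^ 2) ltac:(lra))).
  - rewrite exp_opp_mult_exp. apply sum_eq; intros n _.
    rewrite (D_r_comp_sq G HG _ Hcos n r Hr), <- Rinv_pow_opp2. ring.
Qed.

Lemma D_up_r_sin_laguerre N x0 r : 0 < r ->
  exists S : R,
    is_series (fun n => 2 ^ (2 * n + 1) * INR (fact n) * x0 ^ (2 * n + 1)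
                        / INR (fact (2 * n + 1)) * r * laguerre n (INR N + 1/2) (r ^ 2)) S /\
    sum_f_R0 (fun n => Binomial.C N n * / (-2) ^ n
                       * D_up_r n (fun s => sin (2 * x0 * s)) r) N
    = exp (- x0 ^ 2) * S.
Proof.
  intros Hr.
  set (G n v := 2 * x0 * PSeries (PS_derive_n n (hyp0F1_coef (3/2) (- x0 ^ 2))) v).
  assert (HG : forall n v, is_derive (G n) v (G (S n) v))
    by (intros; apply is_derive_scal, is_derive_PSeries_derive_n, CV_radius_hyp0F1; lra).
  assert (Hsin : forall s, 0 < s -> sin (2 * x0 * s) = s * G O (s ^ 2)).
  { intros s _. unfold G. rewrite sin_hyp0F1, (PSeries_ext _ _ _ (PS_derive_n_O _)).
    ring. }
  exists (exp (x0 ^ 2) * sum_f_R0 (fun n => Binomial.C N n * (-1) ^ n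
    * PSeries (PS_derive_n n (hyp0F1_coef (3/2) (- x0 ^ 2))) (r ^ 2)) N * (2 * x0 * r)).
  split.
  - assert (Hterm : forall n, (x0 ^ 2) ^ n / pochhammer (3/2) n
        * laguerre n (INR N - 1 + 3/2) (r ^ 2) * (2 * x0 * r) =
      2 ^ (2 * n + 1) * INR (fact n) * x0 ^ (2 * n + 1) / INR (fact (2 * n + 1))
        * r * laguerre n (INR N + 1/2) (r ^ 2)).
    { intros n. replace (INR N - 1 + 3/2) with (INR N + 1/2) by lra.
      rewrite fact_double_S, !pow_add, !pow_mult. replace (2 ^ 2) with 4 by ring.
      pose proof (INR_fact_neq_0 n). pose proof (pochhammer_gt0 (3/2) n ltac:(lra)).
      pose proof (pow_lt 4 n ltac:(lra)). field. repeat split; lra. }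
    exact (is_series_ext _ _ _ Hterm (is_series_scal_r _ _ _
      (is_series_laguerre (3/2) N (x0 ^ 2) (r ^ 2) ltac:(lra)))).
  - rewrite Rmult_assoc, exp_opp_mult_exp, (Rmult_comm (sum_f_R0 _ _)), scal_sum.
    apply sum_eq; intros n _.
    rewrite (D_up_r_comp_sq G HG _ Hsin n r Hr), <- Rinv_pow_opp2. unfold G. ring.
Qed.

Theorem corollary1 (m k : nat) (Hm : Nat.Odd m) (x0 r : R) (Hr : 0 < r) :
  let N := (k + (m - 1) / 2)%nat in
  let a := INR k + INR m / 2 - 1 in
  (exists S : R,
     is_series (fun n : nat =>
        2 ^ (2 * n) * INR (fact n) * x0 ^ (2 * n) / INR (fact (2 * n))
        * laguerre n a (r ^ 2)) S /\
     sum_f_R0 (fun n => Binomial.C N n * / (-2) ^ n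
                        * D_r n (fun s => cos (2 * x0 * s)) r) N
     = exp (- x0 ^ 2) * S) /\
  (exists S : R,
     is_series (fun n : nat =>
        2 ^ (2 * n + 1) * INR (fact n) * x0 ^ (2 * n + 1) / INR (fact (2 * n + 1))
        * r * laguerre n (a + 1) (r ^ 2)) S /\
     sum_f_R0 (fun n => Binomial.C N n * / (-2) ^ n
                        * D_up_r n (fun s => sin (2 * x0 * s)) r) N
     = exp (- x0 ^ 2) * S).
Proof.
  intros N a. destruct Hm as [t Hm].
  assert (HN : N = (k + t)%nat).
  { unfold N. replace (m - 1)%nat with (t * 2)%nat by lia. now rewrite Nat.div_mul. }
  assert (Ha : a = INR N - 1/2).
  { unfold a. rewrite HN, Hm, !plus_INR, mult_INR. simpl. field. }
  replace (a + 1) with (INR N + 1/2) by (rewrite Ha; lra).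
  rewrite Ha. split; [apply D_r_cos_laguerre | apply D_up_r_sin_laguerre]; exact Hr.
Qed.
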